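(* Let $G=(N,A)$ be an $s$-$t$ DAG (parallel arcs allowed) and let $uv,xy\in A$. If $uv$ is the immediate $s$-dominator of $xy$, then the immediate $t$-dominator of $uv$ $t$-dominates $xy$.
   Context: An $s$-$t$ DAG is a directed acyclic multigraph with a unique source $s$ and a unique sink $t$ such that every node is reachable from $s$ and every node reaches $t$. An arc $ab$ $s$-dominates an arc $cd$ if $ab=cd$ or every $s$-$c$ path contains $ab$; $ab$ $t$-dominates $cd$ if $ab=cd$ or every $d$-$t$ path contains $ab$; strict domination additionally requires $ab\neq cd$. The immediate $s$-dominator of an arc $cd$ is the strict $s$-dominator of $cd$ that is $s$-dominated by all strict $s$-dominators of $cd$; immediate $t$-dominators are defined symmetrically. The arc dominator trees have an abstract root (corresponding to $s$, resp. $t$): if an arc has no strict $t$-dominator, its immediate $t$-dominator is this abstract root, which by convention $t$-dominates every arc. *)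

From mathcomp Require Import all_boot.
Set Implicit Arguments. Unset Strict Implicit. Unset Printing Implicit Defensive.

(* A directed multigraph: finite node type V, finite arc type E, each arc
   e has a tail [src e] and a head [tgt e]; parallel arcs are distinct
   elements of E with equal endpoints. *)

Section Graph.
Variables (V E : finType) (src tgt : E -> V).

Fixpoint walk (a b : V) (p : seq E) : Prop :=
  match p with
  | [::] => a = b
  | e :: p' => src e = a /\ walk (tgt e) b p'
  end.

Definition reaches (a b : V) : Prop := exists p, walk a b p.

Definition acyclic : Prop := forall a p, walk a a p -> p = [::].

Definition st_dag (s t : V) : Prop :=
  [/\ acyclic,
      (forall v, (forall e, tgt e != v) <-> v = s),
      (forall v, (forall e, src e != v) <-> v = t),
      (forall v, reaches s v) &
      (forall v, reaches v t)].

Definition sdom (s : V) (ab cd : E) : Prop :=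
  ab = cd \/ forall p, walk s (src cd) p -> ab \in p.

Definition tdom (t : V) (ab cd : E) : Prop :=
  ab = cd \/ forall p, walk (tgt cd) t p -> ab \in p.

Definition strict_sdom s ab cd := ab <> cd /\ sdom s ab cd.
Definition strict_tdom t ab cd := ab <> cd /\ tdom t ab cd.

Definition idom_s (s : V) (ab cd : E) : Prop :=
  strict_sdom s ab cd /\ forall b, strict_sdom s b cd -> sdom s b ab.

(* t-dominator trees with abstract root: [None] is the abstract root,
   which t-dominates every arc. *)
Definition tdom_opt (t : V) (o : option E) (cd : E) : Prop :=
  match o with
  | None => True
  | Some ab => tdom t ab cd
  end.

Definition idom_t (t : V) (o : option E) (cd : E) : Prop :=
  match o with
  | None => forall b, ~ strict_tdom t b cd
  | Some ab => strict_tdom t ab cd /\ forall b, strict_tdom t b cd -> tdom t b ab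
  end.

End Graph.

From mathcomp Require Import all_boot.
Set Implicit Arguments. Unset Strict Implicit.

(* Let ab be the immediate t-dominator of uv and suppose some walk P from the
   head of xy to t avoids ab (and ab <> xy).  Then every walk from the head of
   uv to the tail of xy meets ab, since it extends by xy :: P to a walk to t.
   As uv s-dominates xy, ab s-dominates xy as well, so ab s-dominates uv by
   immediacy.  Hence ab lies before uv on some s-walk and after uv on some
   walk towards xy, which closes a cycle through ab and uv. *)

Section CutArcs.
Variables (V E : finType) (src tgt : E -> V).

Local Notation walk := (walk src tgt).
Local Notation reaches := (reaches src tgt).

Definition cut_arc (a b : V) (e : E) : Prop := forall p, walk a b p -> e \in p.

Lemma walk_cat a c b p q : walk a c p -> walk c b q -> walk a b (p ++ q).
Proof.
elim: p a => [|e p IH] a /=; first by move=> ->.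
by move=> [-> hp] hq; split=> //; apply: IH hp hq.
Qed.

Lemma walk_split a b p e : walk a b p -> e \in p ->
  exists p1 p2, [/\ p = p1 ++ e :: p2, walk a (src e) p1 & walk (tgt e) b p2].
Proof.
elim: p a => [|e' p IH] a //= [hs hp].
rewrite in_cons; case: eqP => [-> _|_ /= hin].
  by exists [::], p; split=> //=; rewrite hs.
have [p1 [p2 [-> h1 h2]]] := IH _ hp hin.
by exists (e' :: p1), p2.
Qed.

Lemma cut_arc_reaches a b e : reaches a b -> cut_arc a b e ->
  reaches a (src e) /\ reaches (tgt e) b.
Proof.
move=> [p hp] cut_e; have [p1 [p2 [_ h1 h2]]] := walk_split hp (cut_e p hp).
by split; [exists p1 | exists p2].
Qed.

Lemma cut_arc_trans a b e f : cut_arc a b e -> cut_arc (tgt e) b f ->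
  cut_arc a b f.
Proof.
move=> cut_e cut_f p hp; have [p1 [p2 [-> _ h2]]] := walk_split hp (cut_e p hp).
by rewrite mem_cat in_cons (cut_f p2 h2) !orbT.
Qed.

Lemma cut_arc_prefix a c e f p : cut_arc a c f -> walk (tgt e) c p ->
  f \notin e :: p -> cut_arc a (src e) f.
Proof.
move=> cut_f hp f_notin q hq.
have := cut_f (q ++ e :: p) (walk_cat hq (conj erefl hp : walk (src e) c (e :: p))).
by rewrite mem_cat; case/orP=> // f_in; rewrite f_in in f_notin.
Qed.

Lemma acyclic_no_round_trip e f : acyclic src tgt ->
  reaches (tgt e) (src f) -> reaches (tgt f) (src e) -> False.
Proof.
move=> hacy [p hp] [q hq].
have hcycle : walk (src e) (src e) (e :: p ++ f :: q).
  by split=> //; apply: walk_cat hp _; split.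
by have := hacy _ _ hcycle.
Qed.

End CutArcs.

Theorem lemma7 (V E : finType) (src tgt : E -> V) (s t : V)
  (hG : st_dag src tgt s t) (uv xy : E) :
  idom_s src tgt s uv xy ->
  forall o : option E, idom_t src tgt t o uv -> tdom_opt src tgt t o xy.
Proof.
case: hG => hacy _ _ hreach _.
move=> [[uv_ne_xy [//|uv_cut]] uv_idom] [ab|] //= [[ab_ne_uv [//|ab_cut]] _].
have [->|ab_ne_xy] := eqVneq ab xy; first by left.
right=> P hP; case: (boolP (ab \in P)) => // ab_notin_P; exfalso.
have ab_cut_xy : cut_arc src tgt (tgt uv) (src xy) ab.
  by apply: cut_arc_prefix ab_cut hP _; rewrite in_cons negb_or ab_ne_xy.
have ab_sdom_xy : strict_sdom src tgt s ab xy.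
  by split; [apply/eqP | right; apply: cut_arc_trans uv_cut ab_cut_xy].
have [//|ab_cut_uv] := uv_idom ab ab_sdom_xy.
have [_ uv_to_xy] := cut_arc_reaches (hreach (src xy)) uv_cut.
have [uv_to_ab _] := cut_arc_reaches uv_to_xy ab_cut_xy.
have [_ ab_to_uv] := cut_arc_reaches (hreach (src uv)) ab_cut_uv.
exact: acyclic_no_round_trip hacy ab_to_uv uv_to_ab.
Qed.
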